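(* Let $R$ be a quotient root system and $\Phi\subseteq R^+$ an inversion set. The relation $\leq$ on the set of connected components of $G_\Phi^{\Phi^c}$, defined by $A\le B$ iff there is a (possibly empty) sequence of components $C_1,\dots,C_n$ such that the standard sum $A+C_1+\cdots+C_n$ is defined and equals $B$, is a partial order.
   Context: A quotient root system (QRS) $R$ is the set of non-zero images of a root system $\Delta$ (with base $\Sigma$) under the orthogonal projection of its ambient Euclidean space onto $(\mathrm{span}\,J)^\perp$ for some $J\subsetneq\Sigma$; its base consists of the images of $\Sigma\setminus J$, and every root is an integer combination of the base with all coefficients $\ge0$ (positive roots, $R^+$) or all $\le0$. $\Phi\subseteq R^+$ is closed if $\alpha,\beta\in\Phi$, $\alpha+\beta\in R$ imply $\alpha+\beta\in\Phi$; co-closed if $\Phi^c:=R^+\setminus\Phi$ is closed; an inversion set if both. $G_\Phi^{\Phi^c}$ is the graph with vertex set $\Phi$ in which $\alpha,\alpha'$ are adjacent iff $\alpha-\alpha'\in\Phi^c\cup(-\Phi^c)$; components are its connected components. Addition of components: for components $A,B$ let $Z=\{\alpha+\beta:\alpha\in A,\beta\in B\}\cap R$. If $Z\ne\emptyset$ lies in a single component $C$, $A+B:=C$. If $Z$ meets more than one component, then (as established in the paper) $A=B$ and $Z$ meets exactly two components, $A$ and some $C\ne A$; then $A+A:=C$. If $Z=\emptyset$, $A+B$ is undefined. The standard sum $A+C_1+\cdots+C_n$ means $(\cdots((A+C_1)+C_2)+\cdots)+C_n$, with every partial sum required to be defined; for $n=0$ it is $A$. *)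

From HB Require Import structures.
From mathcomp Require Import all_boot all_order all_algebra.
From mathcomp Require Import finmap.
From Stdlib Require Import Relations.

Set Implicit Arguments.
Unset Strict Implicit.
Unset Printing Implicit Defensive.

Import Order.TTheory GRing.Theory Num.Theory.
Local Open Scope fset_scope.
Local Open Scope ring_scope.

Section QRS.
Variables (R : realFieldType) (n : nat).
Notation V := 'rV[R]_n.

Definition dotv (u v : V) : R := (u *m v^T) 0 0.

Definition in_span (S : {fset V}) (v : V) : Prop :=
  exists c : V -> R, v = \sum_(a <- S) c a *: a.

Definition lin_indep (S : {fset V}) : Prop :=
  forall c : V -> R, \sum_(a <- S) c a *: a = 0 -> forall a, a \in S -> c a = 0.

Definition root_system (D : {fset V}) : Prop :=
  [/\ (0 : V) \notin D,
      (forall v : V, in_span D v),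
      (forall a b, a \in D -> b \in D ->
         b - ((2 * dotv b a) / dotv a a) *: a \in D),
      (forall a b, a \in D -> b \in D ->
         exists z : int, (2 * dotv b a) / dotv a a = z%:~R) &
      (forall a (c : R), a \in D -> c *: a \in D -> c = 1 \/ c = -1)].

Definition is_base (D S : {fset V}) : Prop :=
  [/\ S `<=` D, lin_indep S, (forall v : V, in_span S v) &
      (forall b, b \in D -> exists k : V -> int,
          b = \sum_(s <- S) (k s)%:~R *: s /\
          ((forall s, s \in S -> 0 <= k s) \/ (forall s, s \in S -> k s <= 0)))].

Definition is_orth_proj (J : {fset V}) (p : V -> V) : Prop :=
  forall v : V, in_span J (v - p v) /\ (forall j, j \in J -> dotv (p v) j = 0).

Variables (D S J : {fset V}) (p : V -> V) (Phi : {fset V}).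

(* the quotient root system R: nonzero images of D *)
Definition inQ (b : V) : Prop := exists2 a, a \in D & b = p a /\ b != 0.

Definition inQplus (b : V) : Prop :=
  inQ b /\ exists k : V -> nat, b = \sum_(s <- S `\` J) (k s)%:R *: p s.

Definition inPhic (b : V) : Prop := inQplus b /\ b \notin Phi.

Definition closed_Phi : Prop :=
  forall a b, a \in Phi -> b \in Phi -> inQ (a + b) -> a + b \in Phi.

Definition coclosed_Phi : Prop :=
  forall a b, inPhic a -> inPhic b -> inQ (a + b) -> inPhic (a + b).

Definition inversion_set : Prop :=
  [/\ (forall b, b \in Phi -> inQplus b), closed_Phi & coclosed_Phi].

Definition adj (a a' : V) : Prop :=
  [/\ a \in Phi, a' \in Phi & (inPhic (a - a') \/ inPhic (a' - a))].

Definition conn : V -> V -> Prop := clos_refl_trans V adj.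

Definition is_comp (C : {fset V}) : Prop :=
  exists2 x, x \in Phi & forall y, y \in C <-> conn x y.

Definition inZ (A B : {fset V}) (z : V) : Prop :=
  exists a b, [/\ a \in A, b \in B, z = a + b & inQ z].

Definition comp_add (A B C : {fset V}) : Prop :=
  [/\ is_comp A, is_comp B, is_comp C &
    ( ((exists z, inZ A B z) /\ (forall z, inZ A B z -> z \in C))
    \/ [/\ A = B, C <> A,
           (exists2 z, inZ A B z & z \in A),
           (exists2 z, inZ A B z & z \in C) &
           (forall z, inZ A B z -> z \in A \/ z \in C)] )].

(* std_sum A [:: C1; ...; Cn] B : the standard sum A + C1 + ... + Cn is
   defined and equals B *)
Inductive std_sum : {fset V} -> seq {fset V} -> {fset V} -> Prop :=
| std_sum_nil A : std_sum A [::] A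
| std_sum_cons A C cs D B :
    comp_add A C D -> std_sum D cs B -> std_sum A (C :: cs) B.

Definition comp_le (A B : {fset V}) : Prop :=
  exists cs, (forall C, C \in cs -> is_comp C) /\ std_sum A cs B.

End QRS.

Definition partial_order_on (T : Type) (P : T -> Prop) (le : T -> T -> Prop) :=
  [/\ (forall x, P x -> le x x),
      (forall x y, P x -> P y -> le x y -> le y x -> x = y) &
      (forall x y z, P x -> P y -> P z -> le x y -> le y z -> le x z)].

(* Let [ht] be the height along [Sigma \ J]: it is additive and positive on
   [R^+], hence on [Phi].  If [A + C = D] with [D <> A], then every [a] in [A]
   has a partner [c] in [C] with [a + c] in [D]: a partner is transported along
   the edges of [A], using that in a quotient root system the sum of two roots
   with negative inner product is a root or zero.  So a nontrivial standard sum
   strictly raises the maximal height of a component, which gives antisymmetry;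
   reflexivity and transitivity come from the empty sum and concatenation. *)

From HB Require Import structures.
From mathcomp Require Import all_boot all_order all_algebra.
From mathcomp Require Import finmap.
From mathcomp Require Import ring lra zify.
From Stdlib Require Import Relations IndefiniteDescription.

Set Implicit Arguments.
Unset Strict Implicit.
Unset Printing Implicit Defensive.
Import Order.TTheory GRing.Theory Num.Theory.
Local Open Scope fset_scope.
Local Open Scope ring_scope.

Ltac vec_ring := apply/rowP => i; rewrite !mxE; ring.

Lemma seq_argmin disp (T : eqType) (O : orderType disp) (s : seq T) (F : T -> O)
    x0 :
  x0 \in s -> exists2 a, a \in s & forall b, b \in s -> (F a <= F b)%O.
Proof.
elim: s x0 => // y s IH x0 _; case: s IH => [|z s] IH.
  by exists y => [|b]; rewrite ?mem_head // inE => /eqP ->.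
have [a aS Ha] := IH z (mem_head _ _).
have [Fya|Fay] := leP (F y) (F a).
  exists y => [|b]; rewrite ?mem_head // inE => /orP[/eqP -> //|/Ha].
  exact: le_trans.
exists a => [|b]; first by rewrite inE aS orbT.
by rewrite inE => /orP[/eqP ->|/Ha //]; apply: ltW.
Qed.

Section EuclideanSpace.
Variables (R : realFieldType) (n : nat).
Local Notation V := 'rV[R]_n.
Local Notation dot := (@dotv R n).

Lemma dotvC (u v : V) : dot u v = dot v u.
Proof. by rewrite /dotv -{1}(trmxK u) -trmx_mul mxE. Qed.

Lemma dotvDl (u v w : V) : dot (u + v) w = dot u w + dot v w.
Proof. by rewrite /dotv mulmxDl mxE. Qed.

Lemma dotvZl k (u w : V) : dot (k *: u) w = k * dot u w.
Proof. by rewrite /dotv -scalemxAl mxE. Qed.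

Lemma dotvNl (u w : V) : dot (- u) w = - dot u w.
Proof. by rewrite -scaleN1r dotvZl mulN1r. Qed.

Lemma dotvBl (u v w : V) : dot (u - v) w = dot u w - dot v w.
Proof. by rewrite dotvDl dotvNl. Qed.

Lemma dotv_suml I (s : seq I) (F : I -> V) w :
  dot (\sum_(i <- s) F i) w = \sum_(i <- s) dot (F i) w.
Proof. by rewrite /dotv mulmx_suml summxE. Qed.

Lemma dotvDr (u v w : V) : dot w (u + v) = dot w u + dot w v.
Proof. by rewrite dotvC dotvDl !(dotvC w). Qed.

Lemma dotvZr k (u w : V) : dot w (k *: u) = k * dot w u.
Proof. by rewrite dotvC dotvZl dotvC. Qed.

Lemma dotvNr (u w : V) : dot w (- u) = - dot w u.
Proof. by rewrite dotvC dotvNl dotvC. Qed.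

Lemma dotvBr (u v w : V) : dot w (u - v) = dot w u - dot w v.
Proof. by rewrite dotvDr dotvNr. Qed.

Lemma dotv_sumr I (s : seq I) (F : I -> V) w :
  dot w (\sum_(i <- s) F i) = \sum_(i <- s) dot w (F i).
Proof. by rewrite dotvC dotv_suml; apply: eq_bigr => i _; rewrite dotvC. Qed.

Lemma dotvvE (u : V) : dot u u = \sum_i u 0 i ^+ 2.
Proof. by rewrite /dotv !mxE; apply: eq_bigr => i _; rewrite mxE expr2. Qed.

Lemma dotvv_ge0 (u : V) : 0 <= dot u u.
Proof. by rewrite dotvvE sumr_ge0 // => i _; rewrite sqr_ge0. Qed.

Lemma dotvv_eq0 (u : V) : (dot u u == 0) = (u == 0).
Proof.
rewrite dotvvE psumr_eq0 => [|i _]; last exact: sqr_ge0.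
apply/allP/eqP => [u0|-> i _] /=; last by rewrite mxE sqrf_eq0.
apply/rowP => i; rewrite mxE; apply/eqP.
by rewrite -sqrf_eq0 (implyP (u0 i _)) // mem_index_enum.
Qed.

Lemma dotvv_gt0 (u : V) : u != 0 -> 0 < dot u u.
Proof. by move=> u_neq0; rewrite lt_def dotvv_eq0 u_neq0 dotvv_ge0. Qed.

Lemma dotv_proportional (a b : V) :
  b != 0 -> dot a a * dot b b <= dot a b ^+ 2 -> a = (dot a b / dot b b) *: b.
Proof.
move=> b_neq0 le_AB_C2; have B_gt0 := dotvv_gt0 b_neq0.
have ww : dot (dot b b *: a - dot a b *: b) (dot b b *: a - dot a b *: b) =
          dot b b * (dot a a * dot b b - dot a b ^+ 2).
  by rewrite !dotvBl !dotvBr !dotvZl !dotvZr (dotvC b a); ring.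
have /eqP : dot b b *: a - dot a b *: b = 0.
  apply/eqP; rewrite -dotvv_eq0 eq_le dotvv_ge0 andbT ww.
  by rewrite pmulr_rle0 // subr_le0.
rewrite subr_eq0 => /eqP Ba; apply: (scalerI (lt0r_neq0 B_gt0)).
by rewrite Ba scalerA mulrCA divff ?mulr1 // lt0r_neq0.
Qed.

Section Span.
Variable X : {fset V}.

Lemma spanD u v : in_span X u -> in_span X v -> in_span X (u + v).
Proof.
move=> [c ->] [d ->]; exists (fun a => c a + d a).
by rewrite -big_split; apply: eq_bigr => i _; rewrite scalerDl.
Qed.

Lemma spanZ k u : in_span X u -> in_span X (k *: u).
Proof.
move=> [c ->]; exists (fun a => k * c a).
by rewrite scaler_sumr; apply: eq_bigr => i _; rewrite scalerA.
Qed.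

Lemma spanB u v : in_span X u -> in_span X v -> in_span X (u - v).
Proof. by move=> Xu Xv; rewrite -scaleN1r; apply/spanD/spanZ. Qed.

Lemma sum_indicator_scale t : t \in X -> \sum_(a <- X) (a == t)%:R *: a = t.
Proof.
move=> tX; rewrite (big_fsetD1 t) //= eqxx scale1r big1_fset ?addr0 //.
by move=> a; rewrite !inE => /andP[/negPf -> _] _; rewrite scale0r.
Qed.

Lemma span_mem t : t \in X -> in_span X t.
Proof. by move=> tX; exists (fun a => (a == t)%:R); rewrite sum_indicator_scale. Qed.

Lemma dotv_span0 w v :
  (forall j, j \in X -> dot w j = 0) -> in_span X v -> dot w v = 0.
Proof.
move=> wX [c ->]; rewrite dotv_sumr big_seq big1 // => i iX.
by rewrite dotvZr wX // mulr0.
Qed.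

Lemma span_orth_eq0 w : (forall j, j \in X -> dot w j = 0) -> in_span X w -> w = 0.
Proof. by move=> wX Xw; apply/eqP; rewrite -dotvv_eq0 (dotv_span0 wX Xw). Qed.

(* Split the coefficients of [v] into positive and negative parts [v = vp - vm]:
   then [dot vm vm = dot vp vm - dot v vm <= 0]. *)
Lemma obtuse_span_nonneg v :
  (forall i j, i \in X -> j \in X -> i != j -> dot i j <= 0) ->
  in_span X v -> (forall j, j \in X -> 0 <= dot v j) ->
  exists2 c : V -> R, forall a, 0 <= c a & v = \sum_(a <- X) c a *: a.
Proof.
move=> obtuseX [c v_def] v_ge0.
pose cp a := if 0 <= c a then c a else 0.
pose cm a := if 0 <= c a then 0 else - c a.
have cp_ge0 a : 0 <= cp a by rewrite /cp; case: ifP.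
have cm_ge0 a : 0 <= cm a.
  by rewrite /cm; case: ifPn => //; rewrite -ltNge oppr_ge0 => /ltW.
have cpm a : cp a * cm a = 0 by rewrite /cp /cm; case: ifP; rewrite ?mulr0 ?mul0r.
set vp := \sum_(a <- X) cp a *: a; set vm := \sum_(a <- X) cm a *: a.
have v_pm : v = vp - vm.
  rewrite v_def /vp /vm -sumrB; apply: eq_bigr => a _; rewrite -scalerBl.
  by rewrite /cp /cm; case: ifP; rewrite ?subr0 ?sub0r ?opprK.
have vp_vm_le0 : dot vp vm <= 0.
  rewrite dotv_suml big_seq; apply: sumr_le0 => i iX.
  rewrite dotvZl dotv_sumr big_seq mulr_sumr; apply: sumr_le0 => j jX.
  rewrite dotvZr mulrA; have [<-|ij] := eqVneq i j; first by rewrite cpm mul0r.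
  by rewrite mulr_ge0_le0 ?mulr_ge0 ?obtuseX.
have v_vm_ge0 : 0 <= dot v vm.
  rewrite dotv_sumr big_seq; apply: sumr_ge0 => j jX.
  by rewrite dotvZr mulr_ge0 ?v_ge0.
have vm0 : vm = 0.
  apply/eqP; rewrite -dotvv_eq0 eq_le dotvv_ge0 andbT.
  have -> : dot vm vm = dot vp vm - dot v vm.
    by rewrite -dotvBl v_pm opprB addrC subrK.
  lra.
by exists cp; rewrite // v_pm vm0 subr0.
Qed.
End Span.

Section OrthogonalProjection.
Variables (J : {fset V}) (p : V -> V).
Hypothesis p_orth_proj : is_orth_proj J p.

Lemma proj_span u : in_span J (u - p u).
Proof. by case: (p_orth_proj u). Qed.

Lemma proj_orth u j : j \in J -> dot (p u) j = 0.
Proof. by case: (p_orth_proj u) => _; apply. Qed.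

Lemma proj_orth_span u v : in_span J v -> dot (p u) v = 0.
Proof. by apply: dotv_span0 => j; apply: proj_orth. Qed.

Lemma proj_unique v w :
  (forall j, j \in J -> dot w j = 0) -> in_span J (v - w) -> p v = w.
Proof.
move=> wJ vwJ; apply/eqP; rewrite -subr_eq0; apply/eqP.
apply: (span_orth_eq0 (X := J)).
  by move=> j jJ; rewrite dotvBl proj_orth // wJ // subr0.
have -> : p v - w = (v - w) - (v - p v) by vec_ring.
by apply: spanB => //; apply: proj_span.
Qed.

Lemma projD u v : p (u + v) = p u + p v.
Proof.
apply: proj_unique => [j jJ|]; first by rewrite dotvDl !proj_orth // addr0.
have -> : u + v - (p u + p v) = (u - p u) + (v - p v) by vec_ring.
by apply: spanD; apply: proj_span.
Qed.

Lemma projZ k u : p (k *: u) = k *: p u.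
Proof.
apply: proj_unique => [j jJ|]; first by rewrite dotvZl proj_orth // mulr0.
by rewrite -scalerBr; apply/spanZ/proj_span.
Qed.

Lemma proj0 : p 0 = 0.
Proof. by have := projZ 0 0; rewrite !scale0r. Qed.

Lemma projN u : p (- u) = - p u.
Proof. by rewrite -scaleN1r projZ scaleN1r. Qed.

Lemma projB u v : p (u - v) = p u - p v.
Proof. by rewrite projD projN. Qed.

Lemma proj_sum I (s : seq I) (F : I -> V) :
  p (\sum_(i <- s) F i) = \sum_(i <- s) p (F i).
Proof.
elim: s => [|a s IH]; first by rewrite !big_nil proj0.
by rewrite !big_cons projD IH.
Qed.

Lemma proj_span0 w : in_span J w -> p w = 0.
Proof.
by move=> Jw; apply: proj_unique => [j _|]; rewrite ?subr0 // /dotv mul0mx mxE.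
Qed.

End OrthogonalProjection.

Section RootSystem.
Variable D : {fset V}.
Hypothesis D_root_system : root_system D.

Lemma root_neq0 a : a \in D -> a != 0.
Proof. by case: D_root_system => D0 _ _ _ _ aD; apply: contraNneq D0 => <-. Qed.

Lemma root_refl a b : a \in D -> b \in D -> b - (2 * dot b a / dot a a) *: a \in D.
Proof. by case: D_root_system => _ _ refl _ _; apply: refl. Qed.

Lemma root_opp a : a \in D -> - a \in D.
Proof.
move=> aD; have := root_refl aD aD.
rewrite -mulrA divff ?mulr1 ?dotvv_eq0 ?root_neq0 //.
by rewrite scaler_nat mulr2n opprD addNKr.
Qed.

Lemma root_add_of_cartan_eqN1 a b :
  a \in D -> b \in D -> 2 * dot b a / dot a a = -1 -> b + a \in D.
Proof.
by move=> aD bD cartanN1; have := root_refl aD bD; rewrite cartanN1 scaleN1r opprK.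
Qed.

(* If neither Cartan integer is [-1], both are [<= -2], which forces equality in
   Cauchy-Schwarz; reducedness then leaves only [b = -a]. *)
Lemma root_add a b : a \in D -> b \in D -> dot a b < 0 -> a + b != 0 -> a + b \in D.
Proof.
move=> aD bD ab_lt0 ab_neq0.
have A_gt0 := dotvv_gt0 (root_neq0 aD); have B_gt0 := dotvv_gt0 (root_neq0 bD).
case: D_root_system => _ _ _ cartan_int reduced.
have le_N2 (z : int) : (z%:~R : R) < 0 -> z != -1 -> (z%:~R : R) <= -2.
  by rewrite ltrz0 => z_lt0 z_neqN1; rewrite -[-2]/((-2)%:~R) ler_int; lia.
have [z1 E1] := cartan_int a b aD bD; have [z2 E2] := cartan_int b a bD aD.
have [z1N1|z1_neqN1] := eqVneq z1 (-1).
  by rewrite addrC; apply: root_add_of_cartan_eqN1; rewrite // E1 z1N1.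
have [z2N1|z2_neqN1] := eqVneq z2 (-1).
  by apply: root_add_of_cartan_eqN1; rewrite // E2 z2N1.
rewrite dotvC in E1.
have z1_le : (z1%:~R : R) <= -2.
  by apply: le_N2 z1_neqN1; rewrite -E1 pmulr_llt0 ?invr_gt0 // pmulr_rlt0.
have z2_le : (z2%:~R : R) <= -2.
  by apply: le_N2 z2_neqN1; rewrite -E2 pmulr_llt0 ?invr_gt0 // pmulr_rlt0.
have {}E1 : 2 * dot a b = z1%:~R * dot a a by rewrite -E1 divfK ?lt0r_neq0.
have {}E2 : 2 * dot a b = z2%:~R * dot b b by rewrite -E2 divfK ?lt0r_neq0.
have a_prop : a = (dot a b / dot b b) *: b.
  apply: dotv_proportional; rewrite ?root_neq0 //.
  have z12_ge4 : 4 <= z1%:~R * z2%:~R :> R by nra.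
  have AB_gt0 := mulr_gt0 A_gt0 B_gt0.
  have C2E : 4 * dot a b ^+ 2 = z1%:~R * z2%:~R * (dot a a * dot b b).
    have -> : 4 * dot a b ^+ 2 = (2 * dot a b) * (2 * dot a b) by ring.
    by rewrite {1}E1 E2; ring.
  nra.
have [|k1|kN1] := reduced b (dot a b / dot b b) bD; first by rewrite -a_prop.
  by move: ab_lt0; rewrite a_prop k1 scale1r; lra.
by move: ab_neq0; rewrite a_prop kN1 scaleN1r addNr eqxx.
Qed.

End RootSystem.

Section SimpleSystem.
Variables (D S : {fset V}).
Hypothesis D_root_system : root_system D.
Hypothesis S_base : is_base D S.

Lemma base_sub : {subset S <= D}.
Proof. by case: S_base => /fsubsetP. Qed.

Lemma base_span v : in_span S v.
Proof. by case: S_base => _ _ span_S _. Qed.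

(* Coordinates in the basis [S], extended by [0] outside [S] so that they are
   linear in [v] at every [s]. *)
Definition coord (v : V) (s : V) : R :=
  if s \in S then sval (constructive_indefinite_description _ (base_span v)) s
  else 0.

Lemma coord_spec v : v = \sum_(s <- S) coord v s *: s.
Proof.
rewrite {1}(svalP (constructive_indefinite_description _ (base_span v))).
by rewrite !big_seq; apply: eq_bigr => s sS; rewrite /coord sS.
Qed.

Lemma coord_uniq v c : v = \sum_(s <- S) c s *: s -> {in S, c =1 coord v}.
Proof.
move=> v_def s sS; case: S_base => _ S_indep _ _.
apply/eqP; rewrite -subr_eq0; apply/eqP; apply: (S_indep (fun a => c a - coord v a)) sS.
rewrite (eq_bigr (fun a => c a *: a - coord v a *: a)) => [|a _]; last exact: scalerBl.
by rewrite sumrB -v_def -coord_spec subrr.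
Qed.

Lemma coord_out v s : s \notin S -> coord v s = 0.
Proof. by rewrite /coord => /negPf ->. Qed.

Lemma coordD u v s : coord (u + v) s = coord u s + coord v s.
Proof.
have [sS|sNS] := boolP (s \in S); last by rewrite !coord_out ?addr0.
symmetry; apply: (coord_uniq (c := fun a => coord u a + coord v a)) => //.
under eq_bigr do rewrite scalerDl.
by rewrite big_split -!coord_spec.
Qed.

Lemma coordZ k v s : coord (k *: v) s = k * coord v s.
Proof.
have [sS|sNS] := boolP (s \in S); last by rewrite !coord_out ?mulr0.
symmetry; apply: (coord_uniq (c := fun a => k * coord v a)) => //.
under eq_bigr do rewrite -scalerA.
by rewrite -scaler_sumr -coord_spec.
Qed.

Lemma coordN v s : coord (- v) s = - coord v s.
Proof. by rewrite -scaleN1r coordZ mulN1r. Qed.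

Lemma coord_simple t s : t \in S -> coord t s = (s == t)%:R.
Proof.
move=> tS; have [sS|sNS] := boolP (s \in S).
  symmetry; apply: (coord_uniq (c := fun a => (a == t)%:R)) => //.
  by rewrite sum_indicator_scale.
by rewrite coord_out //; case: eqP sNS => // ->; rewrite tS.
Qed.

Definition height (T : {fset V}) (v : V) : R := \sum_(s <- T) coord v s.

Lemma heightD T u v : height T (u + v) = height T u + height T v.
Proof. by rewrite /height -big_split; apply: eq_bigr => s _; rewrite coordD. Qed.

Lemma heightZ T k v : height T (k *: v) = k * height T v.
Proof. by rewrite /height mulr_sumr; apply: eq_bigr => s _; rewrite coordZ. Qed.

Lemma heightN T v : height T (- v) = - height T v.
Proof. by rewrite -scaleN1r heightZ mulN1r. Qed.

Lemma heightB T u v : height T (u - v) = height T u - height T v.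
Proof. by rewrite heightD heightN. Qed.

Lemma height_sum T I (r : seq I) (F : I -> V) :
  height T (\sum_(i <- r) F i) = \sum_(i <- r) height T (F i).
Proof.
elim: r => [|i r IH]; last by rewrite !big_cons heightD IH.
by rewrite !big_nil -(scale0r (0 : V)) heightZ mul0r.
Qed.

Lemma height_simple T t : t \in S -> height T t = (t \in T)%:R.
Proof.
move=> tS; rewrite /height (eq_bigr (fun s => (s == t)%:R)) => [|s _]; last first.
  exact: coord_simple.
have [tT|tNT] := boolP (t \in T).
  rewrite (big_fsetD1 t) //= eqxx big1_fset ?addr0 // => s.
  by rewrite !inE => /andP[/negPf -> _].
by rewrite big_seq big1 // => s sT; case: eqP sT tNT => // -> ->.
Qed.

(* Otherwise [i - j] would be a root with coordinates [1] and [-1]. *)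
Lemma simple_dot_le0 i j : i \in S -> j \in S -> i != j -> dot i j <= 0.
Proof.
move=> iS jS ij; rewrite leNgt; apply/negP => ij_gt0.
have ijD : i - j \in D.
  apply: root_add; rewrite ?root_opp ?base_sub ?subr_eq0 //.
  by rewrite dotvC dotvNl oppr_lt0 dotvC.
case: S_base => _ _ _ /(_ _ ijD) [k [ij_def k_sign]].
have /(_ i iS) := coord_uniq ij_def; have /(_ j jS) := coord_uniq ij_def.
rewrite !coordD !coordN !coord_simple // !eqxx (negPf ij) eq_sym (negPf ij).
rewrite subr0 sub0r => kj ki.
case: k_sign => [/(_ j jS)|/(_ i iS)]; first by rewrite -(ler0z R) kj oppr_ge0 ler10.
by rewrite -(lerz0 R) ki ler10.
Qed.

End SimpleSystem.

Section QuotientRootSystem.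
Variables (D S J : {fset V}) (p : V -> V).
Hypothesis D_root_system : root_system D.
Hypothesis S_base : is_base D S.
Hypothesis J_sub : J `<` S.
Hypothesis p_orth_proj : is_orth_proj J p.
Local Notation Q := (inQ D p).
Local Notation Qplus := (inQplus D S J p).
Local Notation ht := (height S_base (S `\` J)).

Lemma J_subS : {subset J <= S}.
Proof. exact/fsubsetP/fproper_sub. Qed.

Lemma height_span0 w : in_span J w -> ht w = 0.
Proof.
move=> [c ->]; rewrite height_sum big_seq big1 // => j jJ.
by rewrite heightZ (height_simple S_base) ?J_subS // in_fsetD jJ mulr0.
Qed.

Lemma height_proj_simple s : s \in S `\` J -> ht (p s) = 1.
Proof.
move=> sSJ; have sS : s \in S by move: sSJ; rewrite in_fsetD => /andP[].
have -> : p s = s - (s - p s) by vec_ring.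
rewrite heightB (height_span0 (proj_span p_orth_proj s)).
by rewrite (height_simple S_base) // sSJ subr0.
Qed.

Lemma height_pos b : Qplus b -> 0 < ht b.
Proof.
move=> [[a _ [_ b_neq0]] [k b_def]].
have ht_b : ht b = \sum_(s <- S `\` J) (k s)%:R.
  rewrite b_def height_sum big_seq [RHS]big_seq; apply: eq_bigr => s sSJ.
  by rewrite heightZ height_proj_simple // mulr1.
have [/hasP[s sSJ ks_gt0]|/hasPn k0] := boolP (has (fun s => 0 < k s)%N (S `\` J)).
  rewrite ht_b (big_fsetD1 s) //= ltr_pwDl ?ltr0n //.
  by apply: sumr_ge0 => i _; rewrite ler0n.
move: b_neq0; rewrite b_def big_seq big1 ?eqxx // => s /k0.
by rewrite lt0n negbK => /eqP ->; rewrite scale0r.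
Qed.

Lemma inQ_opp b : Q b -> Q (- b).
Proof.
move=> [a aD [-> b_neq0]]; exists (- a); first exact: root_opp.
by rewrite (projN p_orth_proj) oppr_eq0.
Qed.

Lemma inQ_sign b : Q b -> Qplus b \/ Qplus (- b).
Proof.
move=> Qb; have [a aD [b_def _]] := Qb.
case: S_base => _ _ _ /(_ a aD) [k [a_def k_sign]].
have pa_def : p a = \sum_(s <- S `\` J) (k s)%:~R *: p s.
  rewrite a_def (proj_sum p_orth_proj) (big_fset_incl _ (fsubsetDl S J)) => [|s sS].
    by apply: eq_bigr => s _; rewrite (projZ p_orth_proj).
  rewrite in_fsetD sS andbT negbK => sJ.
  by rewrite (proj_span0 p_orth_proj (span_mem sJ)) scaler0.
case: k_sign => k_sign; [left; split=> //|right; split; first exact: inQ_opp].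
  exists (fun s => `|k s|%N); rewrite b_def pa_def !big_seq.
  apply: eq_bigr => s; rewrite in_fsetD => /andP[_ sS].
  by rewrite pmulrn gez0_abs ?k_sign.
exists (fun s => `|k s|%N); rewrite b_def pa_def -sumrN !big_seq.
apply: eq_bigr => s; rewrite in_fsetD => /andP[_ sS].
by rewrite pmulrn lez0_abs ?k_sign // mulrNz scaleNr.
Qed.

(* Minimize the height along [J] over the fibre of [p a0]: reflecting along a
   [j] with [dot a j > 0] would stay in the fibre and lower it. *)
Lemma exists_lowest_lift a0 : a0 \in D ->
  exists2 a, a \in D & p a = p a0 /\ forall j, j \in J -> dot a j <= 0.
Proof.
move=> a0D; have : a0 \in [seq a <- D | p a == p a0] by rewrite mem_filter eqxx.
case/(seq_argmin (height S_base J)) => a; rewrite mem_filter => /andP[/eqP pa aD] a_min.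
exists a => //; split => // j jJ; rewrite leNgt; apply/negP => aj_gt0.
have jS := J_subS jJ; have jD := base_sub S_base jS.
have c_gt0 : 0 < 2 * dot a j / dot j j.
  by rewrite divr_gt0 ?mulr_gt0 ?dotvv_gt0 ?(root_neq0 D_root_system).
have := a_min (a - (2 * dot a j / dot j j) *: j).
rewrite mem_filter root_refl // (projB p_orth_proj) (projZ p_orth_proj).
rewrite (proj_span0 p_orth_proj (span_mem jJ)) scaler0 subr0 pa eqxx.
move=> /(_ isT); rewrite heightB heightZ (height_simple S_base J jS) jJ mulr1; lra.
Qed.

(* With [a], [b] lifts of [x], [y] chosen lowest, resp. highest, along [J], the
   corrections [a - x] and [b - y] lie in [span J] and have nonpositive inner
   product, so [dot a b <= dot x y < 0]. *)
Lemma inQ_add x y : Q x -> Q y -> dot x y < 0 -> x + y != 0 -> Q (x + y).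
Proof.
move=> [a0 a0D [x_def _]] Qy xy_lt0 xy_neq0.
have [a aD [pa a_le0]] := exists_lowest_lift a0D; rewrite -x_def in pa.
have [b bD [pb b_ge0]] :
    exists2 b, b \in D & p b = y /\ forall j, j \in J -> 0 <= dot b j.
  have [b0 b0D [Ny_def _]] := inQ_opp Qy.
  have [b bD [pb b_le0]] := exists_lowest_lift b0D.
  exists (- b); first exact: root_opp.
  split=> [|j jJ]; first by rewrite (projN p_orth_proj) pb -Ny_def opprK.
  by rewrite dotvNl oppr_ge0 b_le0.
have J_obtuse i j : i \in J -> j \in J -> i != j -> dot i j <= 0.
  move=> iJ jJ.
  exact: (simple_dot_le0 D_root_system S_base) (J_subS iJ) (J_subS jJ).
have orth_J u j : j \in J -> dot (u - p u) j = dot u j.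
  by move=> jJ; rewrite dotvBl (proj_orth p_orth_proj) // subr0.
have [c c_ge0 v_def] : exists2 c : V -> R, forall j, 0 <= c j &
    b - y = \sum_(j <- J) c j *: j.
  apply: obtuse_span_nonneg => // [|j jJ]; first by rewrite -pb; apply: proj_span.
  by rewrite -pb orth_J ?b_ge0.
have uv_le0 : dot (a - x) (b - y) <= 0.
  rewrite v_def dotv_sumr big_seq; apply: sumr_le0 => j jJ.
  by rewrite dotvZr -pa orth_J // mulr_ge0_le0 ?a_le0.
have xv0 : dot x (b - y) = 0.
  by rewrite -pa (proj_orth_span p_orth_proj) // -pb; apply: proj_span.
have uy0 : dot (a - x) y = 0.
  by rewrite dotvC -pb (proj_orth_span p_orth_proj) // -pa; apply: proj_span.
have ab_lt0 : dot a b < 0.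
  have -> : dot a b = dot x y + dot x (b - y) + dot (a - x) y + dot (a - x) (b - y).
    by rewrite !dotvBl !dotvBr; ring.
  lra.
have ab_neq0 : a + b != 0.
  apply: contraNneq xy_neq0 => ab0.
  by rewrite -pa -pb -(projD p_orth_proj) ab0 (proj0 p_orth_proj).
by exists (a + b); [exact: root_add | rewrite (projD p_orth_proj) pa pb].
Qed.

Lemma inQ_sub x y : Q x -> Q y -> 0 < dot x y -> x != y -> Q (x - y).
Proof.
move=> Qx Qy xy_gt0 xy_neq.
by apply: inQ_add; rewrite ?dotvNr ?oppr_lt0 ?subr_eq0 //; apply: inQ_opp.
Qed.

(* The four inner products below cannot all have the wrong sign:
   adding them up gives [dot x x <= dot y (z - x) <= 0]. *)
Lemma inQ_sub_or_add x y z : x != 0 -> Q y -> Q z -> Q (x + y) -> Q (z - x) ->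
  x + y != z -> z + y != 0 -> Q (x + y - z) \/ Q (z + y).
Proof.
move=> x_neq0 Qy Qz Qxy Qzx xyz_neq zy_neq0.
have [yzx_gt0|yzx_le0] := ltP 0 (dot y (z - x)).
  left; have -> : x + y - z = y - (z - x) by vec_ring.
  by apply: inQ_sub => //; apply: contra_neq xyz_neq => ->; rewrite addrC subrK.
have [zy_lt0|zy_ge0] := ltP (dot z y) 0; first by right; apply: inQ_add.
have [xyzx_lt0|xyzx_ge0] := ltP (dot (x + y) (z - x)) 0.
  right; have zyE : z + y = x + y + (z - x) by vec_ring.
  by rewrite zyE; apply: inQ_add; rewrite // -zyE.
have [xyz_gt0|xyz_le0] := ltP 0 (dot (x + y) z); first by left; apply: inQ_sub.
have := dotvv_gt0 x_neq0; move: yzx_le0 zy_ge0 xyzx_ge0 xyz_le0.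
rewrite !dotvBr !dotvDl (dotvC y x) (dotvC x z) (dotvC y z); lra.
Qed.

Section Components.
Variable Phi : {fset V}.
Hypothesis Phi_inversion_set : inversion_set D S J p Phi.
Local Notation Phic := (inPhic D S J p Phi).
Local Notation adjc := (adj D S J p Phi).
Local Notation connc := (conn D S J p Phi).
Local Notation comp := (is_comp D S J p Phi).
Local Notation comp_add := (comp_add D S J p Phi).
Local Notation std_sum := (std_sum D S J p Phi).

Lemma Phi_inQplus b : b \in Phi -> Qplus b.
Proof. by case: Phi_inversion_set => Phi_pos _ _; apply: Phi_pos. Qed.

Lemma Phi_inQ b : b \in Phi -> Q b.
Proof. by case/Phi_inQplus. Qed.

Lemma height_Phi_gt0 b : b \in Phi -> 0 < ht b.
Proof. by move/Phi_inQplus; apply: height_pos. Qed.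

Lemma Phi_addr_closed a b : a \in Phi -> b \in Phi -> Q (a + b) -> a + b \in Phi.
Proof. by case: Phi_inversion_set => _ Phi_closed _; apply: Phi_closed. Qed.

Lemma Phi_add_not_Phic u v :
  u \in Phi -> v \in Phi -> ~ Phic (u + v) /\ ~ Phic (- (u + v)).
Proof.
move=> uP vP; split=> [[[Quv _] uvNP]|[/height_pos]].
  by rewrite Phi_addr_closed in uvNP.
have := height_Phi_gt0 uP; have := height_Phi_gt0 vP.
by rewrite heightN heightD; lra.
Qed.

Lemma adj_sym a b : adjc a b -> adjc b a.
Proof. by case=> aP bP ab; split=> //; case: ab; [right|left]. Qed.

Lemma conn_sym a b : connc a b -> connc b a.
Proof.
elim=> [x y /adj_sym|x|x y z _ IHxy _ IHyz]; first exact: rt_step.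
  exact: rt_refl.
exact: rt_trans IHyz IHxy.
Qed.

Lemma conn_Phi a b : connc a b -> a \in Phi -> b \in Phi.
Proof. by elim=> [x y []|//|x y z _ IHxy _ IHyz] // /IHxy /IHyz. Qed.

Lemma comp_Phi C y : comp C -> y \in C -> y \in Phi.
Proof. by case=> x xP C_def /C_def /conn_Phi; apply. Qed.

Lemma comp_conn C y z : comp C -> y \in C -> connc y z -> z \in C.
Proof. by case=> x xP C_def /C_def xy yz; apply/C_def; apply: rt_trans xy yz. Qed.

Lemma comp_in_conn C y z : comp C -> y \in C -> z \in C -> connc y z.
Proof. by case=> x xP C_def /C_def xy /C_def xz; apply: rt_trans (conn_sym xy) xz. Qed.

Lemma comp_eq A B y : comp A -> comp B -> y \in A -> y \in B -> A = B.
Proof.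
move=> HA HB yA yB; apply/fsetP => z; apply/idP/idP => zX.
  exact/(comp_conn HB yB)/(comp_in_conn HA yA zX).
exact/(comp_conn HA yA)/(comp_in_conn HB yB zX).
Qed.

Lemma comp_nonempty C : comp C -> exists x, x \in C.
Proof. by case=> x xP C_def; exists x; apply/C_def/rt_refl. Qed.

Section TransportAlongEdge.
Variables (A C D' : {fset V}) (a0 c0 a1 : V).
Hypotheses (HA : comp A) (HC : comp C) (HD' : comp D') (D'A : D' <> A).
Hypotheses (a0A : a0 \in A) (c0C : c0 \in C) (a0c0D' : a0 + c0 \in D').
Hypothesis a01 : adjc a0 a1.

Let a1A : a1 \in A. Proof. exact: comp_conn HA a0A (rt_step _ _ _ _ a01). Qed.

Let a1_not_adj : ~ adjc a1 (a0 + c0).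
Proof. by move=> /(rt_step _ _ _ _) /(comp_conn HA a1A) /(comp_eq HD' HA a0c0D'). Qed.

Lemma comp_add_step_add : Q (a1 + c0) -> a1 + c0 \in D'.
Proof.
move=> Qa1c0; have [_ a1P edge] := a01; have c0P := comp_Phi HC c0C.
apply: (comp_conn HD' a0c0D'); apply: rt_step; split.
- exact: comp_Phi HD' a0c0D'.
- exact: Phi_addr_closed.
have -> : a0 + c0 - (a1 + c0) = a0 - a1 by vec_ring.
by have -> : a1 + c0 - (a0 + c0) = a1 - a0 by vec_ring.
Qed.

Lemma comp_add_step_sub : Q (a0 + c0 - a1) -> a0 + c0 - a1 \in C.
Proof.
move=> Qw; have [a0P a1P edge] := a01.
have c0P := comp_Phi HC c0C; have d0P := comp_Phi HD' a0c0D'.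
have [w_pos|Nw_pos] := inQ_sign Qw.
  have [wP|wNP] := boolP (a0 + c0 - a1 \in Phi).
    apply: (comp_conn HC c0C); apply: rt_step; split=> //.
    have -> : c0 - (a0 + c0 - a1) = a1 - a0 by vec_ring.
    have -> : a0 + c0 - a1 - c0 = a0 - a1 by vec_ring.
    by case: edge; [right|left].
  by case: a1_not_adj; split=> //; right.
have [NwP|NwNP] := boolP (- (a0 + c0 - a1) \in Phi).
  have [notPc notNPc] := Phi_add_not_Phic c0P NwP.
  have gE : c0 + - (a0 + c0 - a1) = a1 - a0 by vec_ring.
  by rewrite gE opprB in notPc notNPc; case: edge.
case: a1_not_adj; split=> //; left.
by have -> : a1 - (a0 + c0) = - (a0 + c0 - a1) by vec_ring.
Qed.

Lemma comp_add_step : exists2 c1, c1 \in C & a1 + c1 \in D'.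
Proof.
have [a0P a1P edge] := a01; have c0P := comp_Phi HC c0C.
have a0c0_neq_a1 : a0 + c0 != a1.
  by apply/eqP => a1E; apply: D'A; apply: (comp_eq HD' HA a0c0D'); rewrite a1E.
have a1c0_neq0 : a1 + c0 != 0.
  apply/eqP => /(congr1 ht); rewrite heightD.
  have := height_Phi_gt0 a1P; have := height_Phi_gt0 c0P.
  by rewrite -(scale0r (0 : V)) heightZ mul0r; lra.
have a0_neq0 : a0 != 0 by case: (Phi_inQ a0P) => ? _ [].
have Qa1a0 : Q (a1 - a0).
  by case: edge => -[[Qe _] _] //; rewrite -opprB; apply: inQ_opp.
have Qd0 := Phi_inQ (comp_Phi HD' a0c0D').
have [Qw|Qv] := inQ_sub_or_add a0_neq0 (Phi_inQ c0P) (Phi_inQ a1P) Qd0 Qa1a0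
  a0c0_neq_a1 a1c0_neq0.
  by exists (a0 + c0 - a1); [apply: comp_add_step_sub | rewrite addrC subrK].
by exists c0 => //; apply: comp_add_step_add.
Qed.

End TransportAlongEdge.

Lemma comp_add_propagate A C D' a0 c0 :
  comp A -> comp C -> comp D' -> D' <> A ->
  a0 \in A -> c0 \in C -> a0 + c0 \in D' ->
  forall a, a \in A -> exists2 c, c \in C & a + c \in D'.
Proof.
move=> HA HC HD' D'A a0A c0C a0c0D' a aA.
elim: (clos_rt_rtn1 _ _ _ _ (comp_in_conn HA a0A aA)) => [|y z yz a0y [c cC ycD']].
  by exists c0.
have yA : y \in A by apply: comp_conn HA a0A (clos_rtn1_rt _ _ _ _ a0y).
exact: comp_add_step HA HC HD' D'A yA cC ycD' yz.
Qed.

Lemma comp_add_witness A C D' : comp_add A C D' ->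
  exists a0 c0, [/\ a0 \in A, c0 \in C & a0 + c0 \in D'].
Proof.
case=> _ _ _ [[[z Zz] ZD']|[_ _ _ [z Zz zD'] _]].
  by have [a0 [c0 [a0A c0C zE _]]] := Zz; exists a0, c0; rewrite -zE ZD'.
by have [a0 [c0 [a0A c0C zE _]]] := Zz; exists a0, c0; rewrite -zE.
Qed.

Lemma comp_add_height A C D' : comp_add A C D' -> D' != A ->
  forall a, a \in A -> exists2 d, d \in D' & ht a < ht d.
Proof.
move=> AC_D' /eqP D'A a aA; have [HA HC HD' _] := AC_D'.
have [a0 [c0 [a0A c0C a0c0D']]] := comp_add_witness AC_D'.
have [c cC acD'] := comp_add_propagate HA HC HD' D'A a0A c0C a0c0D' aA.
exists (a + c) => //; rewrite heightD ltrDl.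
exact: height_Phi_gt0 (comp_Phi HC cC).
Qed.

Lemma std_sum_height A cs B : std_sum A cs B -> A != B ->
  forall a, a \in A -> exists2 b, b \in B & ht a < ht b.
Proof.
elim=> [A0|A0 C cs0 D' B0 AC_D' _ IH]; first by rewrite eqxx.
move=> A0B0 a aA; have [D'A0|D'A0] := eqVneq D' A0.
  by apply: IH; rewrite ?D'A0.
have [d dD' ad] := comp_add_height AC_D' D'A0 aA.
have [<-|D'B0] := eqVneq D' B0; first by exists d.
by have [b bB0 db] := IH D'B0 d dD'; exists b; rewrite ?(lt_trans ad).
Qed.

Lemma std_sum_cat A cs B ds C :
  std_sum A cs B -> std_sum B ds C -> std_sum A (cs ++ ds) C.
Proof. by elim=> // A0 C0 cs0 D' B0 AC_D' _ IH /IH; apply: std_sum_cons. Qed.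

Lemma comp_le_refl A : comp_le D S J p Phi A A.
Proof. by exists [::]; split=> //; apply: std_sum_nil. Qed.

Lemma comp_le_trans A B C :
  comp_le D S J p Phi A B -> comp_le D S J p Phi B C -> comp_le D S J p Phi A C.
Proof.
move=> [cs [cs_comp AB]] [ds [ds_comp BC]]; exists (cs ++ ds).
split; last exact: std_sum_cat AB BC.
by move=> X; rewrite mem_cat => /orP[/cs_comp|/ds_comp].
Qed.

Lemma comp_le_antisym A B :
  comp A -> comp_le D S J p Phi A B -> comp_le D S J p Phi B A -> A = B.
Proof.
move=> HA [cs [_ AB]] [ds [_ BA]]; apply/eqP/negP => /negP neqAB.
have [x xA] := comp_nonempty HA.
have [a aA a_max] := seq_argmin (fun v => - ht v) xA.
have [b bB ab] := std_sum_height AB neqAB aA.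
have neqBA : B != A by rewrite eq_sym.
have [a' a'A ba'] := std_sum_height BA neqBA bB.
by have := a_max a' a'A; rewrite lerN2; lra.
Qed.

End Components.
End QuotientRootSystem.
End EuclideanSpace.

Theorem proposition4p17 (R : realFieldType) (n : nat)
  (Delta Sigma J : {fset 'rV[R]_n}) (p : 'rV[R]_n -> 'rV[R]_n)
  (Phi : {fset 'rV[R]_n}) :
  root_system Delta ->
  is_base Delta Sigma ->
  J `<` Sigma ->
  is_orth_proj J p ->
  inversion_set Delta Sigma J p Phi ->
  partial_order_on (is_comp Delta Sigma J p Phi)
                   (comp_le Delta Sigma J p Phi).
Proof.
move=> Delta_rs Sigma_base J_sub p_proj Phi_inv; split.
- by move=> A _; apply: comp_le_refl.
- move=> A B HA _.
  exact: (comp_le_antisym Delta_rs Sigma_base J_sub p_proj Phi_inv HA).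
- by move=> A B C _ _ _; apply: comp_le_trans.
Qed.
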